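(* In the setting below, let $u\ne v$ in $V$ satisfy $\ell_u\ell_v c_{u,v}^2\le 1/16$. Then for every integer $k\ge184$, $$\nu\big(k_{u,v}(P)+k_{v,u}(P)=k+1\big)\le\frac12\,\nu\big(k_{u,v}(P)+k_{v,u}(P)=k-1\big).$$
   Context: Let $G=G(V)$ be a finite connected network with symmetric conductances $c_{x,y}\ge0$, $c_x=\sum_yc_{x,y}$; $v_0\in V$; $\ell_w>0$ for $w\in V$, $t=\ell_{v_0}$, $\Gamma=\{L^w_{\tau(t)}=\ell_w\text{ for }w\ne v_0\}$. The continuous-time walk started at $v_0$ jumps from $x$ to $y$ with probability $c_{x,y}/c_x$ after i.i.d. mean-one exponential holding times; $L^w_s=\frac1{c_w}\int_0^s\mathbf 1_{\{X_r=w\}}dr$; $\tau(t)=\inf\{s:L^{v_0}_s>t\}$. $\mathcal P$ is the embedded jump path up to $\tau(t)$; $\Omega$ is the set of paths from $v_0$ to $v_0$ visiting every vertex; $k_{x,y}(P)$ counts traversals of directed edge $\langle x,y\rangle$. $\nu$ is the conditional law of $\mathcal P$ given $\Gamma$ on $\Omega$: $\nu(A)=\sum_{P\in A}\mu(\mathcal P=P,\Gamma)/\sum_{P\in\Omega}\mu(\mathcal P=P,\Gamma)$, with $\mu(\mathcal P=P,\Gamma)=\mathbb P(\mathcal P=P)f_P$ and $f_P$ the conditional density of $(L^w_{\tau(t)})_{w\ne v_0}$ at $(\ell_w)_{w\ne v_0}$ given $\mathcal P=P$. *)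

From HB Require Import structures.
From mathcomp Require Import all_boot all_order all_algebra.
From mathcomp Require Import all_classical all_reals all_analysis.
Set Implicit Arguments. Unset Strict Implicit. Unset Printing Implicit Defensive.
Import Order.TTheory GRing.Theory Num.Theory.
Local Open Scope ring_scope.
Local Open Scope classical_set_scope.

Section Network.
Variables (R : realType) (V : finType).
Variable c : V -> V -> R.
Variable v0 : V.
Variable l : V -> R.          (* target local times l_w; t = l v0 *)

Definition cond (x : V) : R := \sum_(y : V) c x y.

(* A path is the sequence of visited vertices [x_0; x_1; ...; x_m]. *)
Definition steps (P : seq V) : seq (V * V) := zip P (behead P).

Definition kxy (x y : V) (P : seq V) : nat := count (pred1 (x, y)) (steps P).

Definition nvis (w : V) (P : seq V) : nat := count_mem w P.

Definition Omega : set (seq V) :=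
  [set P | match P with
           | [::] => false
           | x0 :: p => [&& x0 == v0, path (fun a b : V => 0 < c a b) x0 p,
                          last x0 p == v0 & all (fun w => w \in P) (enum V)]
           end].

Definition jump_prob (P : seq V) : R :=
  \prod_(e <- steps P) (c e.1 e.2 / cond e.1).

Definition poisson_pmf (lam : R) (n : nat) : R :=
  expR (- lam) * lam ^+ n / (n`!)%:R.

(* density at x of the Gamma(shape n, rate r) law, i.e. of the sum of n i.i.d.
   Exp(1) variables divided by r; for n = 0 the law is the Dirac mass at 0,
   whose density at x > 0 is 0. *)
Definition gamma_density (n : nat) (r x : R) : R :=
  if n is n'.+1 then r ^+ n * x ^+ n' * expR (- (r * x)) / (n'`!)%:R else 0.

(* P(𝒫 = P) for P from v0 to v0: the jump chain follows P, and the local time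
   at v0 first exceeds t = l v0 during the last (nvis v0 P)-th visit to v0,
   i.e. exactly nvis v0 P - 1 of the i.i.d. Exp(1) holding times at v0 complete
   before c_{v0} t (a Poisson count). *)
Definition path_prob (P : seq V) : R :=
  jump_prob P * poisson_pmf (cond v0 * l v0) (nvis v0 P).-1.

(* f_P: conditional density of (L^w_{tau(t)})_{w <> v0} at (l_w)_{w <> v0}
   given 𝒫 = P; given the path, L^w is the sum of nvis w P i.i.d. Exp(1)
   holding times divided by c_w, independently over w. *)
Definition fP (P : seq V) : R :=
  \prod_(w : V | w != v0) gamma_density (nvis w P) (cond w) (l w).

Definition mu_joint (P : seq V) : R := path_prob P * fP P.

Definition nu (A : set (seq V)) : R :=
  fine (\esum_(P in A `&` Omega) (mu_joint P)%:E) /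
  fine (\esum_(P in Omega) (mu_joint P)%:E).

End Network.

From Pilot Require Import Defs.
From HB Require Import structures.
From mathcomp Require Import all_boot all_order all_algebra.
From mathcomp Require Import all_classical all_reals all_analysis.
From mathcomp Require Import zify ring lra.
Set Implicit Arguments. Unset Strict Implicit. Unset Printing Implicit Defensive.
Import Order.TTheory GRing.Theory Num.Theory.
Local Open Scope ring_scope.
Local Open Scope classical_set_scope.

(** A path [t] with [k + 1 >= 3] crossings of the edge [uv] traverses one
   orientation, say [a -> b], twice: [t = A a b S a b B].  Cutting out the detour
   gives [s = A a (rev S) b B], which is still in [Omega], has [k - 1] crossings and
   one visit fewer to each of [u] and [v]; conversely [t] is rebuilt from [s] and
   the positions in [s] of one visit to [u] and one visit to [v].  The explicit
   weights give [mu t * n_u(s) * n_v(s) = c_uv^2 l_u l_v * mu s], so summing over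
   the [n_u(s) n_v(s)] markings of each [s], the mass of the paths with [k + 1]
   crossings is at most [c_uv^2 l_u l_v <= 1/16] times the mass of those with
   [k - 1] crossings. *)

Section Zigzag.
Variable V : finType.
Implicit Types (A B S s t : seq V) (a b x y : V).

Lemma steps_cons2 a b s : steps (a :: b :: s) = (a, b) :: steps (b :: s).
Proof. by []. Qed.

Lemma steps_cat s1 x s2 :
  steps (s1 ++ x :: s2) = steps (rcons s1 x) ++ steps (x :: s2).
Proof. by elim: s1 => [|a [|b s1] IH] //; rewrite cat_cons rcons_cons steps_cons2 IH. Qed.

Lemma steps_rev s : steps (rev s) = rev (map swap_pair (steps s)).
Proof.
elim: s => [|x [|y s] IH] //.
rewrite steps_cons2 rev_cons -cats1 (rev_cons y s) -cats1 -catA /=.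
by rewrite steps_cat -rev_cons IH rev_cons -cats1.
Qed.

Definition straight A a b S B := A ++ a :: rev S ++ b :: B.

(* [zigzag] is [straight] with its stretch [a (rev S) b] replaced by [a b], that
   stretch walked backwards, and [a b] again. *)
Definition zigzag A a b S B := A ++ a :: b :: S ++ a :: b :: B.

Lemma big_steps_zigzag (T : Type) (idx : T) (op : Monoid.com_law idx)
    (f : V * V -> T) A a b S B : (forall e, f (swap_pair e) = f e) ->
  \big[op/idx]_(e <- steps (zigzag A a b S B)) f e =
  \big[op/idx]_(e <- (a, b) :: (a, b) :: steps (straight A a b S B)) f e.
Proof.
move=> f_sym.
have -> : steps (zigzag A a b S B) = steps (rcons A a) ++
    (a, b) :: steps (rcons (b :: S) a) ++ (a, b) :: steps (b :: B).
  by rewrite /zigzag steps_cat steps_cons2 -cat_cons steps_cat steps_cons2.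
have -> : steps (straight A a b S B) = steps (rcons A a) ++
    rev (map swap_pair (steps (rcons (b :: S) a))) ++ steps (b :: B).
  by rewrite /straight steps_cat -cat_cons steps_cat -steps_rev rev_rcons rev_cons.
set mid := steps (rcons (b :: S) a).
rewrite [RHS](perm_big (steps (rcons A a) ++ (a, b) :: rev (map swap_pair mid) ++
    (a, b) :: steps (b :: B))); last first.
  by apply/permP => p; rewrite /= !count_cat /= count_cat /=; lia.
by rewrite !(big_cat, big_cons) big_rev big_map (eq_bigr _ (fun e _ => f_sym e)).
Qed.

Lemma count_steps_zigzag (p : pred (V * V)) A a b S B :
    (forall e, p (swap_pair e) = p e) ->
  count p (steps (zigzag A a b S B)) =
  ((p (a, b)).*2 + count p (steps (straight A a b S B)))%N.
Proof.
move=> p_sym; rewrite -!sumn_count !sumnE !big_map.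
rewrite (@big_steps_zigzag _ _ _ (fun e => nat_of_bool (p e))) => [|e]; last by rewrite p_sym.
by rewrite !big_cons /= addnA addnn.
Qed.

Lemma all_steps_zigzag (p : pred (V * V)) A a b S B :
    (forall e, p (swap_pair e) = p e) ->
  all p (steps (zigzag A a b S B)) = p (a, b) && all p (steps (straight A a b S B)).
Proof.
by move=> p_sym; rewrite -!big_all big_steps_zigzag // !big_cons /= andbA andbb.
Qed.

Lemma mem_zigzag A a b S B : zigzag A a b S B =i straight A a b S B.
Proof.
move=> w; rewrite !(mem_cat, inE, mem_rev).
by case: (w \in A); case: (w == a); case: (w == b); case: (w \in S).
Qed.

Lemma count_mem_zigzag A a b S B w : count_mem w (zigzag A a b S B) =
  (count_mem w (straight A a b S B) + (a == w) + (b == w))%N.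
Proof. by rewrite !(count_cat, count_rev) /= !(count_cat, count_rev) /=; lia. Qed.

Lemma head_zigzag x0 A a b S B :
  head x0 (zigzag A a b S B) = head x0 (straight A a b S B).
Proof. by case: A. Qed.

Lemma last_zigzag x0 A a b S B :
  last x0 (zigzag A a b S B) = last x0 (straight A a b S B).
Proof. by rewrite !last_cat /= !last_cat. Qed.

Lemma straight_neq_nil A a b S B : straight A a b S B != [::].
Proof. by case: A. Qed.

Lemma zigzag_neq_nil A a b S B : zigzag A a b S B != [::].
Proof. by case: A. Qed.

Lemma steps_split x y t : (x, y) \in steps t -> exists A B, t = A ++ x :: y :: B.
Proof.
elim: t => [|a [|b t] IH] //; rewrite steps_cons2 inE => /orP[/eqP[-> ->]|].
  by exists [::], t.
by case/IH => A [B ->]; exists (a :: A), B.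
Qed.

Lemma zigzag_split x y t : x != y -> (1 < count_mem (x, y) (steps t))%N ->
  exists A S B, t = zigzag A x y S B.
Proof.
move=> xy; elim: t => [|a [|b t] IH] //; rewrite steps_cons2 /=.
case: eqP => [[-> ->]|_] /=; last by case/IH => A [S [B ->]]; exists (a :: A), S, B.
rewrite add1n ltnS -has_count has_pred1 => /steps_split[[|a' S] [B []]].
  by move=> yx; rewrite yx eqxx in xy.
by move=> -> ->; exists [::], S, B.
Qed.

Definition zigzag_at x0 s i j :=
  zigzag (take i s) (nth x0 s i) (nth x0 s j)
         (rev (take (j - i.+1) (drop i.+1 s))) (drop j.+1 s).

Lemma straight_at x0 s i j : (i < j)%N -> (j < size s)%N ->
  s = straight (take i s) (nth x0 s i) (nth x0 s j)
               (rev (take (j - i.+1) (drop i.+1 s))) (drop j.+1 s).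
Proof.
move=> ij js; rewrite /straight revK -{1}(cat_take_drop i s); congr (_ ++ _).
rewrite (drop_nth x0) ?(ltn_trans ij js) //; congr (_ :: _).
rewrite -{1}(cat_take_drop (j - i.+1) (drop i.+1 s)); congr (_ ++ _).
by rewrite drop_drop subnK // (drop_nth x0).
Qed.

Lemma zigzag_at_straight x0 A a b S B (s := straight A a b S B)
    (i := size A) (j := (size A + (size S).+1)%N) :
  [/\ (i < j)%N, (j < size s)%N, nth x0 s i = a, nth x0 s j = b &
      zigzag_at x0 s i j = zigzag A a b S B].
Proof.
have si : nth x0 s i = a by rewrite nth_cat ltnn subnn.
have sj : nth x0 s j = b.
  by rewrite nth_cat ifF; [rewrite addKn /= nth_cat size_rev ltnn subnn | lia].
split => //; first lia.
  by rewrite /j /s /straight size_cat /= size_cat size_rev /=; lia.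
rewrite /zigzag_at si sj /s /straight take_size_cat // -cat_rcons.
have -> : (j - i.+1 = size S)%N by lia.
rewrite drop_size_cat ?size_rcons // take_size_cat ?size_rev // revK.
have -> : j.+1 = size (A ++ a :: rev S ++ [:: b]).
  by rewrite !size_cat /= size_cat size_rev /=; lia.
rewrite cat_rcons (_ : A ++ a :: rev S ++ b :: B = (A ++ a :: rev S ++ [:: b]) ++ B).
  by rewrite drop_size_cat.
by rewrite -catA /= -catA.
Qed.

End Zigzag.

Lemma prodr_count_mem (R : comRingType) (V : finType) (F : V -> R) (s : seq V) :
  \prod_(x <- s) F x = \prod_w F w ^+ count_mem w s.
Proof.
elim: s => [|x s IH]; first by rewrite big_nil big1.
under [RHS]eq_bigr do rewrite /= exprD.
rewrite big_cons IH big_split /=; congr (_ * _).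
by rewrite (bigD1 x) //= eqxx big1 ?mulr1 // => w /negbTE; rewrite eq_sym => ->.
Qed.

Lemma count_mem_sources (V : finType) (x : V) p w :
  (count_mem w (map fst (steps (x :: p))) + (last x p == w))%N = count_mem w (x :: p).
Proof.
elim: p x => [|y p IH] x /=; first by rewrite addn0.
by rewrite -addnA IH.
Qed.

Definition joins {V : eqType} (u v : V) (e : V * V) := (e == (u, v)) || (e == (v, u)).

Lemma joins_swap {V : eqType} (u v : V) e : joins u v (swap_pair e) = joins u v e.
Proof.
by case: e => x y; rewrite /joins /swap_pair !xpair_eqE /= orbC andbC [(y == _) && _]andbC.
Qed.

Section PathWeight.
Variables (R : realType) (V : finType) (c : V -> V -> R) (v0 : V) (l : V -> R).
Hypothesis c_sym : forall x y, c x y = c y x.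
Hypothesis c_ge0 : forall x y, 0 <= c x y.
Hypothesis l_gt0 : forall w, 0 < l w.

Definition edge_weight (P : seq V) : R := \prod_(e <- steps P) c e.1 e.2.

Definition local_time_weight w n :=
  if w == v0 then Defs.poisson_pmf (cond c v0 * l v0) n.-1
  else gamma_density n (cond c w) (l w).

(* A path from v0 to v0 leaves w once per visit, except for the final visit at v0. *)
Definition vertex_weight w n :=
  (cond c w)^-1 ^+ (n - (v0 == w)) * local_time_weight w n.

Lemma mu_jointE P : P != [::] -> last v0 P = v0 ->
  mu_joint c v0 l P = edge_weight P * \prod_w vertex_weight w (nvis w P).
Proof.
case: P => [//|x p] _ last_v0.
have departures w : count_mem w (map fst (steps (x :: p))) = (nvis w (x :: p) - (v0 == w))%N.
  by rewrite /nvis -(count_mem_sources x p w) [last _ _]last_v0 addnK.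
rewrite /mu_joint /path_prob /jump_prob /fP big_split -/(edge_weight _).
rewrite -(big_map fst xpredT (fun x => (cond c x)^-1)) prodr_count_mem.
rewrite /vertex_weight big_split [X in _ = _ * (_ * X)](bigD1 v0) //=.
rewrite {1}/local_time_weight eqxx /Defs.poisson_pmf -!mulrA.
congr (_ * (_ * (_ * (_ * (_ * _))))).
  by apply: eq_bigr => w _; rewrite departures.
by apply: eq_bigr => w /negbTE wv; rewrite /local_time_weight wv.
Qed.

Lemma local_time_weightS w n : (0 < n)%N ->
  local_time_weight w n.+1 * n%:R = cond c w * l w * local_time_weight w n.
Proof.
case: n => [//|n] _; rewrite /local_time_weight /Defs.poisson_pmf /gamma_density.
have n1_neq0 : n.+1%:R != 0 :> R by rewrite pnatr_eq0.
have fact_neq0 : n`!%:R != 0 :> R by rewrite pnatr_eq0 -lt0n fact_gt0.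
by case: eqP => [->|_] /=; rewrite factS natrM !exprS; field; rewrite nat1r n1_neq0 fact_neq0.
Qed.

Lemma vertex_weightS w n : cond c w != 0 -> (0 < n)%N ->
  vertex_weight w n.+1 * n%:R = l w * vertex_weight w n.
Proof.
move=> cw_neq0 n_gt0; rewrite /vertex_weight -mulrA local_time_weightS //.
have -> : (n.+1 - (v0 == w) = (n - (v0 == w)).+1)%N by case: (v0 == w) => /=; lia.
by rewrite exprS; field.
Qed.

Lemma mu_zigzag u v A a b S B (s := straight A a b S B) :
    u != v -> joins u v (a, b) -> last v0 s = v0 ->
    cond c u != 0 -> cond c v != 0 -> (0 < nvis u s)%N -> (0 < nvis v s)%N ->
  mu_joint c v0 l (zigzag A a b S B) * ((nvis u s)%:R * (nvis v s)%:R) =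
  c u v ^+ 2 * l u * l v * mu_joint c v0 l s.
Proof.
move=> uv ab_uv last_s cu cv nu_gt0 nv_gt0.
have last_t : last v0 (zigzag A a b S B) = v0 by rewrite last_zigzag.
have cab : c a b = c u v by case/orP: ab_uv => /eqP[-> ->]; rewrite // c_sym.
have nvis_t w : nvis w (zigzag A a b S B) = (nvis w s + (u == w) + (v == w))%N.
  rewrite /nvis count_mem_zigzag -!addnA; congr (_ + _)%N.
  by case/orP: ab_uv => /eqP[-> ->]; rewrite // addnC.
rewrite !mu_jointE ?straight_neq_nil ?zigzag_neq_nil //.
rewrite /edge_weight big_steps_zigzag => [|e]; last by rewrite /swap_pair c_sym.
rewrite !big_cons /= -/(edge_weight s) cab.
rewrite (bigD1 u) // (bigD1 v) 1?eq_sym //= [in RHS](bigD1 u) // [in RHS](bigD1 v) 1?eq_sym //=.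
rewrite !nvis_t eqxx (negbTE uv) eq_sym (negbTE uv) eqxx !addn0 !addn1.
under eq_bigr => w /andP[wu wv] do rewrite nvis_t eq_sym (negbTE wu) eq_sym (negbTE wv) !addn0.
set nu := nvis u s; set nv := nvis v s.
transitivity (c u v ^+ 2 * edge_weight s * (vertex_weight u nu.+1 * nu%:R) *
    (vertex_weight v nv.+1 * nv%:R) * \prod_(w | (w != u) && (w != v)) vertex_weight w (nvis w s)).
  by ring.
by rewrite !vertex_weightS //; ring.
Qed.

Lemma cond_ge0 w : 0 <= cond c w.
Proof. exact: sumr_ge0. Qed.

Lemma cond_gt0 w w' : 0 < c w w' -> 0 < cond c w.
Proof. by move=> cww'; rewrite /cond (bigD1 w') //= ltr_wpDr // sumr_ge0. Qed.

Lemma mu_joint_ge0 P : 0 <= mu_joint c v0 l P.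
Proof.
have l_ge0 w : 0 <= l w by apply: ltW.
rewrite /mu_joint /path_prob /jump_prob /fP /Defs.poisson_pmf.
apply: mulr_ge0; [apply: mulr_ge0|].
- by apply: prodr_ge0 => e _; apply: divr_ge0 => //; apply: cond_ge0.
- by rewrite mulr_ge0 ?invr_ge0 ?mulr_ge0 ?expR_ge0 ?exprn_ge0 ?mulr_ge0 ?cond_ge0.
- apply: prodr_ge0 => w _; rewrite /gamma_density; case: (nvis w P) => [//|n].
  by rewrite mulr_ge0 ?invr_ge0 ?mulr_ge0 ?expR_ge0 ?exprn_ge0 ?cond_ge0.
Qed.

End PathWeight.

Lemma path_steps (V : finType) (r : rel V) x p :
  path r x p = all (fun e => r e.1 e.2) (steps (x :: p)).
Proof. by elim: p x => [|y p IH] x //=; rewrite IH. Qed.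

Section OmegaPaths.
Variables (R : realType) (V : finType) (c : V -> V -> R) (v0 : V).
Hypothesis c_sym : forall x y, c x y = c y x.

Definition omega_path (P : seq V) := [&& P != [::], head v0 P == v0, last v0 P == v0,
  all (fun e => 0 < c e.1 e.2) (steps P) & all (fun w => w \in P) (enum V)].

Lemma OmegaE P : Omega c v0 P <-> omega_path P.
Proof.
case: P => [|x p] //=; rewrite /Omega /omega_path /= path_steps.
by case: (x == v0); case: all; case: (last x p == v0).
Qed.

Lemma omega_path_straight A a b S B :
  omega_path (zigzag A a b S B) -> omega_path (straight A a b S B).
Proof.
rewrite /omega_path straight_neq_nil head_zigzag last_zigzag.
rewrite all_steps_zigzag => [|e]; last by rewrite /= c_sym.
by case/and5P => _ -> -> /andP[_ ->] /allP t_all; apply/allP => w /t_all; rewrite mem_zigzag.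
Qed.

End OmegaPaths.

Section ExtendedSums.
Variable R : realType.
Local Open Scope ereal_scope.

Lemma esum_le_image (T T' : choiceType) (A : set T) (X : set T') (f : T' -> T)
    (m : T -> \bar R) :
  (forall t, 0 <= m t) -> A `<=` f @` X ->
  \esum_(t in A) m t <= \esum_(x in X) m (f x).
Proof.
move=> m_ge0 AfX; pose fiber t := X `&` [set x | f x = t].
apply: (@le_trans _ _ (\esum_(t in A) \esum_(x in fiber t) m t)).
  apply: le_esum => t /AfX[x Xx fx]; apply: esum_ge; exists [set x].
    by split; [exact: finite_set1 | move=> y ->].
  by rewrite fsbig_set1.
rewrite esum_esum // (_ : A `*`` fiber = (fun x => (f x, x)) @` (X `&` (A \o f))).
  rewrite (esum_image _ _ (fun k => m k.1)) => [|x y _ _ [] //].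
  by rewrite esum_mkcondr; apply: le_esum => x _; case: ifP.
apply/seteqP; split => [[t x] [/= At [Xx ft]]|_ [x [Xx Afx] <-]] //.
by exists x; rewrite ft.
Qed.

Lemma esumZl_le (T : choiceType) (I : set T) (f : T -> R) (r : R) :
  (0 <= r)%R -> (forall i, 0 <= f i)%R ->
  \esum_(i in I) (r * f i)%:E <= r%:E * \esum_(i in I) (f i)%:E.
Proof.
move=> r_ge0 f_ge0; apply: ge_ereal_sup => _ [F [finF FI]] <-.
rewrite fsbig_finite //=; under eq_bigr do rewrite EFinM.
rewrite -ge0_sume_distrr => [|i _]; last by rewrite lee_fin.
rewrite lee_wpmul2l ?lee_fin // -fsbig_finite //.
by apply: esum_ge; exists F.
Qed.

End ExtendedSums.

Definition positions (V : eqType) (x0 : V) s w :=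
  [set p : nat | (p < size s)%N && (nth x0 s p == w)].

Lemma esum_positions (R : realType) (V : eqType) (x0 : V) s w (r : R) : 0 <= r ->
  (\esum_(p in positions x0 s w) r%:E = (r *+ count_mem w s)%:E)%E.
Proof.
move=> r_ge0; rewrite -nneseries_esum => [|p _]; last by rewrite lee_fin.
rewrite (nneseries_split_cond _ (size s)) => [|p _]; last by rewrite lee_fin.
rewrite eseries0 ?adde0 => [|p]; last by rewrite add0n leqNgt => /negbTE->.
rewrite sumEFin big_const_seq iter_addr_0 add0n /index_iota subn0.
rewrite (@eq_in_count _ _ (fun p => nth x0 s p == w)) => [|p]; last first.
  by rewrite mem_iota /= add0n => ->.
by rewrite -[in count_mem w s](mkseq_nth x0 s) /mkseq count_map.
Qed.

Section Crossings.
Variables (R : realType) (V : finType) (c : V -> V -> R) (v0 : V) (l : V -> R).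
Hypothesis c_sym : forall x y, c x y = c y x.
Hypothesis c_ge0 : forall x y, 0 <= c x y.
Hypothesis l_gt0 : forall w, 0 < l w.
Variables (u v : V).
Hypothesis uv : u != v.

Let mu_ge0 P : 0 <= mu_joint c v0 l P. Proof. exact: mu_joint_ge0. Qed.

Let factor_ge0 : 0 <= c u v ^+ 2 * l u * l v.
Proof. by apply: mulr_ge0; [apply: mulr_ge0|]; [apply: exprn_ge0|apply: ltW..]. Qed.

Definition crossings P := (kxy u v P + kxy v u P)%N.

Definition with_crossings n := [set P | crossings P = n] `&` Omega c v0.

Lemma crossingsE P : crossings P = count (joins u v) (steps P).
Proof.
rewrite /crossings /kxy -count_predUI (@eq_count _ (predI _ _) pred0) ?count_pred0 ?addn0 //.
by move=> e /=; apply/andP => -[/eqP -> /eqP [] /eqP]; rewrite (negbTE uv).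
Qed.

Lemma crossings_zigzag A a b S B : joins u v (a, b) ->
  crossings (zigzag A a b S B) = (crossings (straight A a b S B)).+2.
Proof. by move=> ab; rewrite !crossingsE count_steps_zigzag ?ab //; exact: joins_swap. Qed.

Lemma with_crossings_eq0 n : c u v = 0 -> with_crossings n.+1 = set0.
Proof.
move=> cuv0; apply/seteqP; split => // P [/= P_cross /OmegaE /and5P[_ _ _ /allP P_edges _]].
have : has (joins u v) (steps P) by rewrite has_count -crossingsE P_cross.
case/hasP => e /P_edges c_e /orP[] /eqP e_uv; move: c_e.
all: by rewrite e_uv /= ?[c v u]c_sym cuv0 ltxx.
Qed.

Variable k : nat.
Hypothesis k_gt1 : (1 < k)%N.

(* A path with k - 1 crossings, marked at a visit to u and at a visit to v;
   [unmark] inserts a zigzag between the two marked visits. *)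
Definition marked_paths :=
  with_crossings k.-1 `*`` (fun s => positions v0 s u `*`` (fun _ => positions v0 s v)).

Definition unmark (x : seq V * (nat * nat)) :=
  zigzag_at v0 x.1 (minn x.2.1 x.2.2) (maxn x.2.1 x.2.2).

Lemma with_crossings_sub_unmark : with_crossings k.+1 `<=` unmark @` marked_paths.
Proof.
move=> t [/= t_cross /OmegaE t_omega].
have [a [b [ab_uv ab_twice]]] : exists a b, joins u v (a, b) /\ (1 < kxy a b t)%N.
  have [uv_twice|] := ltnP 1 (kxy u v t); first by exists u, v; rewrite /joins eqxx.
  by exists v, u; rewrite /joins eqxx orbT; split => //; rewrite /crossings in t_cross; lia.
have ab : a != b by case/orP: ab_uv => /eqP[-> ->]; rewrite // eq_sym.
have [A [S [B t_eq]]] := zigzag_split ab ab_twice; subst t.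
have [ij js si sj t_at] := zigzag_at_straight v0 A a b S B.
set s := straight A a b S B in js si sj t_at *.
have s_down : with_crossings k.-1 s.
  split; last by apply/OmegaE; exact: omega_path_straight.
  by move: t_cross; rewrite /= crossings_zigzag // -/s; lia.
have pos_i : positions v0 s a (size A) by rewrite /positions /= si eqxx (ltn_trans ij js).
have pos_j : positions v0 s b (size A + (size S).+1) by rewrite /positions /= sj eqxx js.
case/orP: ab_uv => /eqP[ea eb]; rewrite ea eb in pos_i pos_j.
  exists (s, (size A, size A + (size S).+1)%N); first by [].
  by rewrite /unmark /= (minn_idPl (ltnW ij)) (maxn_idPr (ltnW ij)).
exists (s, (size A + (size S).+1, size A)%N); first by [].
by rewrite /unmark /= (minn_idPr (ltnW ij)) (maxn_idPl (ltnW ij)).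
Qed.

Lemma mu_unmark x : marked_paths x -> 0 < c u v ->
  mu_joint c v0 l (unmark x) * ((nvis u x.1)%:R * (nvis v x.1)%:R) =
  c u v ^+ 2 * l u * l v * mu_joint c v0 l x.1.
Proof.
case: x => s [p q] /= [[_ /OmegaE s_omega] [/andP[ps /eqP pu] /andP[qs /eqP qv]]] cuv.
have nu_gt0 : (0 < nvis u s)%N by rewrite /nvis -has_count has_pred1 -pu mem_nth.
have nv_gt0 : (0 < nvis v s)%N by rewrite /nvis -has_count has_pred1 -qv mem_nth.
have js : (maxn p q < size s)%N by rewrite gtn_max ps qs.
have [ij ab_uv] : (minn p q < maxn p q)%N /\
    joins u v (nth v0 s (minn p q), nth v0 s (maxn p q)).
  case: (ltngtP p q) => [pq|qp|pq]; last by move: uv; rewrite -pu -qv pq eqxx.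
    by rewrite pu qv /joins eqxx.
  by rewrite pu qv /joins eqxx orbT.
have s_eq := straight_at v0 ij js.
rewrite /unmark /zigzag_at /=; move: ab_uv nu_gt0 nv_gt0 s_omega.
set A := take _ s; set a := nth v0 s _; set b := nth v0 s _.
set S := rev _; set B := drop _ s.
rewrite {}s_eq => ab_uv nu_gt0 nv_gt0 /and5P[_ _ /eqP s_last _ _].
have cond_u := cond_gt0 c_ge0 cuv.
have cond_v : 0 < cond c v by apply: (@cond_gt0 _ _ _ c_ge0 _ u); rewrite c_sym.
by apply: mu_zigzag; rewrite // gt_eqF.
Qed.

Lemma esum_unmark s : with_crossings k.-1 s -> 0 < c u v ->
  (\esum_(pq in positions v0 s u `*`` (fun _ => positions v0 s v))
     (mu_joint c v0 l (unmark (s, pq)))%:E =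
   (c u v ^+ 2 * l u * l v * mu_joint c v0 l s)%:E)%E.
Proof.
move=> s_down cuv; have [_ /OmegaE /and5P[_ _ _ _ /allP s_all]] := s_down.
set r := _ * mu_joint c v0 l s; set N := ((nvis u s)%:R * (nvis v s)%:R : R).
have N_neq0 : N != 0.
  by rewrite mulf_neq0 // pnatr_eq0 -lt0n -has_count has_pred1 s_all ?mem_enum.
have r_ge0 : 0 <= r by rewrite /r mulr_ge0.
have rN_ge0 : 0 <= r / N by rewrite divr_ge0 // /N mulr_ge0.
rewrite (eq_esum (b := fun _ => (r / N)%:E)) => [|[p q] pq_pos].
  rewrite -(esum_esum (a := fun _ _ => (r / N)%:E)) => [|*]; last by rewrite lee_fin.
  rewrite (eq_esum (b := fun _ => (r / N *+ nvis v s)%:E)) => [|p _].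
    by rewrite esum_positions ?mulrn_wge0 // -mulrnA mulnC -mulr_natr natrM -/N divfK.
  exact: esum_positions.
by congr EFin; apply: (canRL (mulfK N_neq0)); apply: mu_unmark.
Qed.

Lemma esum_with_crossings_le :
  (\esum_(P in with_crossings k.+1) (mu_joint c v0 l P)%:E <=
   (c u v ^+ 2 * l u * l v)%:E * \esum_(P in with_crossings k.-1) (mu_joint c v0 l P)%:E)%E.
Proof.
have emu_ge0 P : (0 <= (mu_joint c v0 l P)%:E)%E by rewrite lee_fin.
have [cuv_gt0|] := ltP 0 (c u v); last first.
  rewrite le_eqVlt ltNge c_ge0 orbF => /eqP cuv0.
  by rewrite with_crossings_eq0 // esum_set0 mule_ge0 ?lee_fin // esum_ge0.
apply: (le_trans (esum_le_image emu_ge0 with_crossings_sub_unmark)).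
pose m_unmark s pq := (mu_joint c v0 l (unmark (s, pq)))%:E.
rewrite (eq_esum (b := fun x => m_unmark x.1 x.2)) => [|[]//].
rewrite -esum_esum => [|s pq _ _]; last exact: emu_ge0.
under eq_esum => s s_down do rewrite (esum_unmark s_down cuv_gt0).
exact: esumZl_le.
Qed.

End Crossings.

(* [nu] divides by [fine] of the total mass, which is 0 when that mass is
   infinite; both sides then vanish. *)
Lemma nu_le_scale (R : realType) (V : finType) (c : V -> V -> R) (v0 : V) (l : V -> R)
    (A B : set (seq V)) (r : R) :
  (forall P, 0 <= mu_joint c v0 l P) -> 0 <= r ->
  (\esum_(P in A `&` Omega c v0) (mu_joint c v0 l P)%:E <=
   r%:E * \esum_(P in B `&` Omega c v0) (mu_joint c v0 l P)%:E)%E ->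
  nu c v0 l A <= r * nu c v0 l B.
Proof.
move=> mu_ge0 r_ge0 le_AB; rewrite /nu mulrA.
set total := \esum_(P in Omega c v0) _.
have total_ge0 : (0 <= total)%E by apply: esum_ge0 => P _; rewrite lee_fin.
have [total_fin|] := boolP (total \is a fin_num); last first.
  by move: total_ge0; case: total => // _ _; rewrite invr0 !mulr0.
have fin I : \esum_(P in I `&` Omega c v0) (mu_joint c v0 l P)%:E \is a fin_num.
  rewrite ge0_fin_numE ?esum_ge0 // => [|P _]; last by rewrite lee_fin.
  apply: (@le_lt_trans _ _ total); last by rewrite -ge0_fin_numE.
  by rewrite esum_mkcondl; apply: le_esum => P _; case: ifP; rewrite // lee_fin.
apply: ler_wpM2r; first by rewrite invr_ge0 fine_ge0.
by rewrite -lee_fin EFinM !fineK.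
Qed.

Theorem lemma4p9 (R : realType) (V : finType) (c : V -> V -> R) (v0 : V)
    (l : V -> R)
    (c_sym : forall x y, c x y = c y x)
    (c_ge0 : forall x y, 0 <= c x y)
    (c_conn : forall x y, connect (fun a b : V => 0 < c a b) x y)
    (l_gt0 : forall w, 0 < l w)
    (u v : V) (huv : u != v)
    (hsmall : l u * l v * c u v ^+ 2 <= 1 / 16)
    (k : nat) (hk : (184 <= k)%N) :
  nu c v0 l [set P | (kxy u v P + kxy v u P = k.+1)%N]
  <= 1 / 2 * nu c v0 l [set P | (kxy u v P + kxy v u P = k.-1)%N].
Proof.
have k_gt1 : (1 < k)%N by apply: leq_trans hk.
apply: nu_le_scale => [P||]; [exact: mu_joint_ge0 | by [] |].
apply: le_trans; first exact: esum_with_crossings_le.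
apply: lee_wpmul2r; first by apply: esum_ge0 => P _; rewrite lee_fin mu_joint_ge0.
by rewrite lee_fin; lra.
Qed.
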